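(* Let $(X, A, \rightarrow)$ be a labelled transition system with finite state set $X$ and a distinguished silent action $\tau \in A$. For all $x, y \in X$: $x \mathrel{\#_b} y$ (i.e. $x$ and $y$ are branching apart) if and only if the configuration $[x,y]$ is winning for Spoiler in the branching bisimulation game.
   Context: Write $x \Longrightarrow x'$ if there is a (possibly empty) sequence of $\tau$-transitions from $x$ to $x'$, and $x \xrightarrow{(\alpha)} x'$ if either $x \xrightarrow{\alpha} x'$, or $\alpha = \tau$ and $x = x'$. A branching apartness relation is a symmetric relation $R \subseteq X \times X$ such that whenever $x \xrightarrow{\alpha} x'$ and for all $y', y''$ with $y \Longrightarrow y' \xrightarrow{(\alpha)} y''$ we have $x \mathrel R y'$ or $x' \mathrel R y''$, then $x \mathrel R y$. States are branching apart, $x \mathrel{\#_b} y$, iff they are related by every branching apartness relation. Branching bisimulation game: Spoiler configurations are $[x,y] \in X^2$ and $[x,x',y,y',y''] \in X^5$; Duplicator configurations are $\langle x,\alpha,x',y\rangle \in X \times A \times X \times X$. Spoiler can move from $[x,y]$ to $\langle x,\alpha,x',y\rangle$ if $x \xrightarrow{\alpha} x'$, and to $\langle y,\alpha,y',x\rangle$ if $y \xrightarrow{\alpha} y'$; and from $[x,x',y,y',y'']$ to $[x,y']$ or to $[x',y'']$. Duplicator can move from $\langle x,\alpha,x',y\rangle$ to $[x,x',y,y',y'']$ if $y \Longrightarrow y' \xrightarrow{(\alpha)} y''$. A play from $[x,y]$ is a finite or infinite sequence of configurations starting at $[x,y]$, each next one a move from the previous; it is maximal if infinite or no move is possible from its last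 configuration. Spoiler wins a finite maximal play iff its last configuration is a Duplicator configuration; all other maximal plays are won by Duplicator. A (positional) Spoiler strategy maps each Spoiler configuration to a Spoiler move from it; a play is consistent with it if all Spoiler moves in the play follow the strategy. $[x,y]$ is winning for Spoiler if there is a Spoiler strategy such that every maximal play from $[x,y]$ consistent with it is won by Spoiler. *)

From mathcomp Require Import all_boot.
Set Implicit Arguments.
Unset Strict Implicit.
Unset Printing Implicit Defensive.

Section LTS.
Variables (X : finType) (A : Type) (step : X -> A -> X -> Prop) (tau : A).

Inductive tau_star : X -> X -> Prop :=
| tau_refl x : tau_star x x
| tau_cons x x1 x' : step x tau x1 -> tau_star x1 x' -> tau_star x x'.

Definition opt_step (x : X) (a : A) (x' : X) : Prop :=
  step x a x' \/ (a = tau /\ x = x').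

Definition branching_apartness (R : X -> X -> Prop) : Prop :=
  (forall x y, R x y -> R y x) /\
  (forall x y a x', step x a x' ->
     (forall y' y'', tau_star y y' -> opt_step y' a y'' -> R x y' \/ R x' y'') ->
     R x y).

Definition branching_apart (x y : X) : Prop :=
  forall R, branching_apartness R -> R x y.

Inductive config : Type :=
| SP2 : X -> X -> config
| SP5 : X -> X -> X -> X -> X -> config
| DUP : X -> A -> X -> X -> config.

Definition is_spoiler (c : config) : Prop :=
  match c with DUP _ _ _ _ => False | _ => True end.

Definition is_duplicator (c : config) : Prop :=
  match c with DUP _ _ _ _ => True | _ => False end.

Inductive move : config -> config -> Prop :=
| mv_left x y a x' : step x a x' -> move (SP2 x y) (DUP x a x' y)
| mv_right x y a y' : step y a y' -> move (SP2 x y) (DUP y a y' x)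
| mv_5a x x' y y' y'' : move (SP5 x x' y y' y'') (SP2 x y')
| mv_5b x x' y y' y'' : move (SP5 x x' y y' y'') (SP2 x' y'')
| mv_dup x a x' y y' y'' :
    tau_star y y' -> opt_step y' a y'' -> move (DUP x a x' y) (SP5 x x' y y' y'').

Definition spoiler_strategy (sigma : config -> config) : Prop :=
  forall c, is_spoiler c -> (exists c', move c c') -> move c (sigma c).

Definition finite_play (c0 : config) (n : nat) (p : nat -> config) : Prop :=
  p 0 = c0 /\ forall i, i < n -> move (p i) (p i.+1).

Definition finite_consistent (sigma : config -> config) (n : nat)
  (p : nat -> config) : Prop :=
  forall i, i < n -> is_spoiler (p i) -> p i.+1 = sigma (p i).

Definition finite_maximal (n : nat) (p : nat -> config) : Prop :=
  ~ (exists c', move (p n) c').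

Definition infinite_play (c0 : config) (p : nat -> config) : Prop :=
  p 0 = c0 /\ forall i, move (p i) (p i.+1).

Definition infinite_consistent (sigma : config -> config) (p : nat -> config)
  : Prop :=
  forall i, is_spoiler (p i) -> p i.+1 = sigma (p i).

(* [x,y] is winning for Spoiler: some Spoiler strategy such that every maximal
   play from [x,y] consistent with it is won by Spoiler, i.e. every finite
   maximal consistent play ends in a Duplicator configuration, and (since
   infinite plays are won by Duplicator) no infinite consistent play exists. *)
Definition spoiler_wins (x y : X) : Prop :=
  exists sigma, spoiler_strategy sigma /\
    (forall n p, finite_play (SP2 x y) n p -> finite_consistent sigma n p ->
       finite_maximal n p -> is_duplicator (p n)) /\
    (forall p, infinite_play (SP2 x y) p -> infinite_consistent sigma p -> False).

End LTS.

From mathcomp Require Import all_boot.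
From Stdlib Require Import Classical ClassicalEpsilon.

Set Implicit Arguments.
Unset Strict Implicit.
Unset Printing Implicit Defensive.

(* Branching apartness is the least symmetric relation closed under the
   apartness rule, i.e. the union of the stages [bapart_upto n] of n rounds of
   the rule; finiteness of X makes this union closed under the rule, because
   the finitely many Duplicator answers to a transition are all refuted at a
   common stage.  A pair at stage n lets Spoiler win within 3n moves: he plays
   the transition used by the rule and, after Duplicator's answer, the pair
   that is apart at a lower stage; always moving to a position of least
   winning time is then a positional winning strategy.  Conversely, if R is an
   apartness relation with ~ R x y, the configurations avoiding R form a trap
   that Spoiler cannot leave and in which Duplicator can always move, so
   against any Spoiler strategy Duplicator never gets stuck. *)

#[local] Arguments SP2 {X A} _ _.
#[local] Arguments SP5 {X A} _ _ _ _ _.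

Lemma ex_minimal (P : nat -> Prop) :
  (exists n, P n) -> exists n, P n /\ forall i, i < n -> ~ P i.
Proof.
move=> [n Pn]; apply: NNPP => no_min.
elim/ltn_ind: n Pn => n IH Pn; apply: no_min.
by exists n; split=> // i /IH.
Qed.

Lemma finite_uniform_bound (T : finType) (P : T -> nat -> Prop) (Q : T -> Prop) :
  (forall t m n, m <= n -> P t m -> P t n) ->
  (forall t, Q t -> exists n, P t n) -> exists N, forall t, Q t -> P t N.
Proof.
move=> P_mono QP; pose bound t := epsilon (inhabits 0) (P t).
exists (\max_t bound t) => t /QP ex_n; apply: (P_mono t (bound t)).
  exact: leq_bigmax.
exact: epsilon_spec.
Qed.

Section BranchingGame.
Variables (X : finType) (A : Type) (step : X -> A -> X -> Prop) (tau : A).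

Local Notation config := (config X A).
Local Notation move := (move step tau).

Definition bapart_rule (R : X -> X -> Prop) (x y : X) : Prop :=
  exists a x', step x a x' /\
    forall y' y'', tau_star step tau y y' -> opt_step step tau y' a y'' ->
      R x y' \/ R x' y''.

Lemma bapart_rule_mono (R R' : X -> X -> Prop) x y :
  (forall u v, R u v -> R' u v) -> bapart_rule R x y -> bapart_rule R' x y.
Proof.
move=> subR [a [x' [st resp]]]; exists a, x'; split=> // y' y'' ys ys'.
by case: (resp _ _ ys ys') => /subR; [left | right].
Qed.

Lemma bapart_rule_closed R x y :
  branching_apartness step tau R -> bapart_rule R x y -> R x y.
Proof. by move=> [_ closedR] [a [x' [st resp]]]; exact: closedR st resp. Qed.

Fixpoint bapart_upto (n : nat) (x y : X) : Prop :=
  if n is m.+1 then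
    [\/ bapart_upto m x y, bapart_rule (bapart_upto m) x y
      | bapart_rule (bapart_upto m) y x]
  else False.

Lemma bapart_upto_mono m n x y : m <= n -> bapart_upto m x y -> bapart_upto n x y.
Proof.
elim: n => [|n IH]; first by rewrite leqn0 => /eqP ->.
by rewrite leq_eqVlt => /orP [/eqP -> // | /IH apart_n /apart_n]; apply: Or31.
Qed.

Lemma bapart_upto_sym n x y : bapart_upto n x y -> bapart_upto n y x.
Proof.
elim: n x y => [//|n IH] x y /= [/IH apart | rule | rule].
- exact: Or31.
- exact: Or33.
- exact: Or32.
Qed.

Lemma bapart_upto_sub R n x y :
  branching_apartness step tau R -> bapart_upto n x y -> R x y.
Proof.
move=> apartR; have [symR _] := apartR.
elim: n x y => [//|n IH] x y /= [/IH // | rule | rule].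
- exact: bapart_rule_closed (bapart_rule_mono IH rule).
- exact/symR/(bapart_rule_closed apartR)/(bapart_rule_mono IH).
Qed.

Lemma bapart_upto_apartness :
  branching_apartness step tau (fun x y => exists n, bapart_upto n x y).
Proof.
split=> [x y [n apart] | x y a x' st resp]; first by exists n; exact: bapart_upto_sym.
pose apart_at t n := bapart_upto n x t.1 \/ bapart_upto n x' t.2.
have apart_at_mono t m n : m <= n -> apart_at t m -> apart_at t n.
  by move=> le_mn [] /(bapart_upto_mono le_mn); [left | right].
have answers_apart (t : X * X) :
    tau_star step tau y t.1 /\ opt_step step tau t.1 a t.2 -> exists n, apart_at t n.
  case: t => y' y'' [ys ys'].
  by case: (resp _ _ ys ys') => [[n apart] | [n apart]]; exists n; [left | right].
have [N apartN] := finite_uniform_bound apart_at_mono answers_apart.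
exists N.+1; apply: Or32; exists a, x'; split=> // y' y'' ys ys'.
exact: (apartN (y', y'')).
Qed.

Lemma branching_apart_upto x y :
  branching_apart step tau x y <-> exists n, bapart_upto n x y.
Proof.
split=> [apart | [n apart] R apartR]; first exact: apart _ bapart_upto_apartness.
exact: bapart_upto_sub apart.
Qed.

Lemma move_dupP u a u' v c :
  move (DUP u a u' v) c ->
  exists v' v'', [/\ tau_star step tau v v', opt_step step tau v' a v''
                   & c = SP5 u u' v v' v''].
Proof. by move=> mv; inversion mv; exists y', y''. Qed.

Definition preference (c : config) (G : config -> Prop) (c' : config) : Prop :=
  move c c' /\ ((exists2 d, move c d & G d) -> G c').

Definition preferred (c : config) (G : config -> Prop) : config :=
  epsilon (inhabits c) (preference c G).

Lemma preferredP c G :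
  (exists c', move c c') -> preference c G (preferred c G).
Proof.
move=> [c' mv]; apply: (epsilon_spec (inhabits c) (preference c G)).
case: (classic (exists2 d, move c d & G d)) => [[d mv_d Gd] | no_good].
- by exists d.
- by exists c'.
Qed.

Lemma preferred_good c G : (exists2 c', move c c' & G c') -> G (preferred c G).
Proof.
case=> c' mv Gc'; apply: (preferredP G (ex_intro _ c' mv)).2.
by exists c'.
Qed.

Fixpoint wins_within (n : nat) (c : config) : Prop :=
  if n is m.+1 then
    match c with
    | DUP _ _ _ _ => forall c', move c c' -> wins_within m c'
    | _ => exists2 c', move c c' & wins_within m c'
    end
  else False.

Lemma wins_within_mono m n c :
  m <= n -> wins_within m c -> wins_within n c.
Proof.
elim: m n c => [//|m IH] [//|n] c le_mn.
case: c => [x y | x x' y y' y'' | x a x' y] /=.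
1,2: by case=> c' mv /(IH n c' le_mn); exists c'.
by move=> wins c' /wins; exact: IH.
Qed.

Lemma wins_within_stuck n c :
  wins_within n c -> ~ (exists c', move c c') -> is_duplicator c.
Proof. by case: n => // n; case: c => //= [x y | x x' y y' y''] [c' mv _] []; exists c'. Qed.

Definition descends (c c' : config) : Prop :=
  forall n, wins_within n.+1 c -> wins_within n c'.

Lemma descending_move c :
  is_spoiler c -> (exists c', move c c') -> exists2 c', move c c' & descends c c'.
Proof.
move=> spl [c0 mv0]; case: (classic (exists n, wins_within n.+1 c)); last first.
  by move=> unforced; exists c0 => // n forced; case: unforced; exists n.
case/ex_minimal=> n0 [forced0 below].
have [c' mv forced'] : exists2 c', move c c' & wins_within n0 c'.
  by case: c spl forced0 mv0 below.
exists c' => // n forced; apply: wins_within_mono forced'.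
by rewrite leqNgt; apply/negP => /below.
Qed.

Definition fastest_strategy (c : config) : config := preferred c (descends c).

Lemma fastest_strategyP : spoiler_strategy step tau fastest_strategy.
Proof. by move=> c _ /(preferredP (descends c)) []. Qed.

Lemma wins_within_step n c c' :
  wins_within n.+1 c -> move c c' -> (is_spoiler c -> c' = fastest_strategy c) ->
  wins_within n c'.
Proof.
case: c => [x y | x x' y y' y'' | u a u' v] forced mv consistent; last exact: forced.
all: rewrite consistent //; apply: (preferred_good (G := descends _)) forced.
all: exact: descending_move (ex_intro _ c' mv).
Qed.

Lemma wins_within_along (p : nat -> config) N n :
  (forall j, j < N -> move (p j) (p j.+1)) ->
  (forall j, j < N -> is_spoiler (p j) -> p j.+1 = fastest_strategy (p j)) ->
  wins_within n (p 0) -> forall i, i <= N -> wins_within (n - i) (p i).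
Proof.
move=> mv consistent forced0; elim=> [_ | i IH lt_iN]; first by rewrite subn0.
have := IH (ltnW lt_iN); rewrite subnS; case: (n - i) => [//|k] forced_i.
exact: wins_within_step forced_i (mv i lt_iN) (consistent i lt_iN).
Qed.

Lemma wins_within_spoiler_wins n x y :
  wins_within n (SP2 x y) -> spoiler_wins step tau x y.
Proof.
move=> forced; exists fastest_strategy; split; first exact: fastest_strategyP.
split=> [N p [p0 mv] consistent stuck | p [p0 mv] consistent].
  rewrite -p0 in forced.
  exact: wins_within_stuck (wins_within_along mv consistent forced (leqnn N)) stuck.
rewrite -p0 in forced.
have := wins_within_along (fun j _ => mv j) (fun j _ => consistent j) forced (leqnn n).
by rewrite subnn.
Qed.

Lemma bapart_rule_wins_within n (R : X -> X -> Prop) u v :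
  (forall x y, R x y -> wins_within n (SP2 x y)) -> bapart_rule R u v ->
  exists a u', step u a u' /\ wins_within n.+2 (DUP u a u' v).
Proof.
move=> forcedR [a [u' [st resp]]]; exists a, u'; split=> // c.
case/move_dupP=> v' [v'' [vs vs' ->]].
case: (resp _ _ vs vs') => /forcedR forced.
- by exists (SP2 u v') => //; exact: mv_5a.
- by exists (SP2 u' v'') => //; exact: mv_5b.
Qed.

Lemma bapart_upto_wins_within m x y :
  bapart_upto m x y -> wins_within (3 * m) (SP2 x y).
Proof.
elim: m x y => [//|m IH] x y; rewrite mulnS.
case=> [/IH | /(bapart_rule_wins_within IH) | /(bapart_rule_wins_within IH)].
- by apply: wins_within_mono; rewrite leq_addl.
- by move=> [a [x' [st forced]]]; exists (DUP x a x' y); first exact: mv_left.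
- by move=> [a [y' [st forced]]]; exists (DUP y a y' x); first exact: mv_right.
Qed.

Lemma trap_not_spoiler_wins (G : config -> Prop) x y :
  G (SP2 x y) ->
  (forall c c', is_spoiler c -> G c -> move c c' -> G c') ->
  (forall c, is_duplicator c -> G c -> exists2 c', move c c' & G c') ->
  ~ spoiler_wins step tau x y.
Proof.
move=> G0 G_spoiler G_dup [sigma [strategy [win_finite win_infinite]]].
pose next c := if c is DUP _ _ _ _ then preferred c G else sigma c.
have next_spoiler c : is_spoiler c -> next c = sigma c by case: c.
have next_trap c : G c -> (exists c', move c c') -> move c (next c) /\ G (next c).
  case: c => [x1 y1 | x1 x2 y1 y2 y3 | u a u' v] Gc ex.
  - have mv := strategy (SP2 x1 y1) I ex; split=> //; exact: G_spoiler mv.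
  - have mv := strategy (SP5 x1 x2 y1 y2 y3) I ex; split=> //; exact: G_spoiler mv.
  - split; first exact: (preferredP G ex).1.
    exact: preferred_good (G_dup (DUP u a u' v) I Gc).
pose p i := iter i next (SP2 x y).
have consistent i : is_spoiler (p i) -> p i.+1 = sigma (p i) by exact: next_spoiler.
case: (classic (exists N, ~ exists c', move (p N) c')) => [|never_stuck].
  case/ex_minimal=> N [stuck before].
  have moves i : i < N -> exists c', move (p i) c' by move/before/NNPP.
  have Gp i : i <= N -> G (p i).
    by elim: i => [//|i IH lt_iN]; exact: (next_trap _ (IH (ltnW lt_iN)) (moves i lt_iN)).2.
  have play : finite_play step tau (SP2 x y) N p.
    by split=> // i lt_iN; exact: (next_trap _ (Gp i (ltnW lt_iN)) (moves i lt_iN)).1.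
  have dup := win_finite N p play (fun i _ => consistent i) stuck.
  by case: (G_dup _ dup (Gp N (leqnn N))) => c' mv _; apply: stuck; exists c'.
have moves i : exists c', move (p i) c' by apply: NNPP => stuck; apply: never_stuck; exists i.
have Gp i : G (p i) by elim: i => [//|i IH]; exact: (next_trap _ IH (moves i)).2.
apply: (win_infinite p) => //; split=> // i.
exact: (next_trap _ (Gp i) (moves i)).1.
Qed.

Definition avoids (R : X -> X -> Prop) (c : config) : Prop :=
  match c with
  | SP2 x y => ~ R x y
  | SP5 x x' _ y' y'' => ~ R x y' /\ ~ R x' y''
  | DUP x a x' y => step x a x' /\ ~ R x y
  end.

Lemma avoids_spoiler_move R :
  branching_apartness step tau R -> forall c c',
  is_spoiler c -> avoids R c -> move c c' -> avoids R c'.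
Proof.
move=> [symR _] c c' + + mv; case: c c' / mv => //=.
- by move=> x y a y' st _ not_xy; split=> // /symR.
- by move=> x x' y y' y'' _ [].
- by move=> x x' y y' y'' _ [].
Qed.

Lemma avoids_duplicator_move R :
  branching_apartness step tau R -> forall c,
  is_duplicator c -> avoids R c -> exists2 c', move c c' & avoids R c'.
Proof.
move=> [_ closedR] [] // u a u' v _ [st not_uv].
apply: NNPP => stuck; apply: not_uv; apply: (closedR _ _ a u' st) => v' v'' vs vs'.
apply: NNPP => /not_or_and [not_uv' not_uv''].
by apply: stuck; exists (SP5 u u' v v' v''); first exact: mv_dup.
Qed.

End BranchingGame.

Theorem theorem4 (X : finType) (A : Type) (step : X -> A -> X -> Prop) (tau : A)
  (x y : X) :
  branching_apart step tau x y <-> spoiler_wins step tau x y.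
Proof.
split=> [/branching_apart_upto [n apart] | wins R apartR].
  exact: wins_within_spoiler_wins (bapart_upto_wins_within apart).
apply: NNPP => not_xy; apply: (trap_not_spoiler_wins (G := avoids step R)) wins.
- exact: not_xy.
- exact: avoids_spoiler_move.
- exact: avoids_duplicator_move.
Qed.
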